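(* Let $G=(V,E,H)$ be a HEDG and $\mathbb{P}_V$ a probability distribution on $\mathcal{X}_V=\prod_{v\in V}\mathcal{X}_v$ (standard Borel spaces). If $(G,\mathbb{P}_V)$ satisfies the directed global Markov property, then it satisfies the general directed global Markov property. If moreover $\{v,w\}\in H$ for all $v\in V$ and all $w\in\mathrm{Sc}^G(v)$, then the converse implication also holds.
   Context: HEDG $G=(V,E,H)$: $V$ finite, $E\subseteq V\times V$ (self-loops allowed), $H$ a simplicial complex on $V$ (contains singletons, closed under subsets); $v\leftrightarrow w$ for distinct $v,w$ with $\{v,w\}\in H$. $\mathrm{Anc}^G(v)$, $\mathrm{Desc}^G(v)$ include $v$; $\mathrm{Sc}^G(v)=\mathrm{Anc}^G(v)\cap\mathrm{Desc}^G(v)$. Paths: node sequences (repetitions allowed) with consecutive nodes joined by $\to,\leftarrow,\leftrightarrow$; an intermediate node $v_i$ is a collider if both adjacent edges have an arrowhead at $v_i$, otherwise a non-collider. d-separation $X\perp^d_GY\mid Z$: every path from $X$ to $Y$ has an endnode in $Z$, or a collider not in $\mathrm{Anc}^G(Z)$, or a non-collider in $Z$. $\sigma$-separation $X\perp^\sigma_GY\mid Z$: every path from $X$ to $Y$ has an endnode in $Z$, or a collider not in $\mathrm{Anc}^G(Z)$, or a non-collider $v_i\in Z$ with an adjacent path edge $v_i\to v_{i+1}$, $v_{i+1}\notin\mathrm{Sc}^G(v_i)$, or $v_{i-1}\leftarrow v_i$, $v_{i-1}\notin\mathrm{Sc}^G(v_i)$. For $X,Y,Z\subseteq V$, $X\perp_{\mathbb{P}_V}Y\mid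 Z$ denotes conditional independence of the coordinate projections. Directed global Markov property: $X\perp^d_GY\mid Z\Rightarrow X\perp_{\mathbb{P}_V}Y\mid Z$ for all $X,Y,Z$. General directed global Markov property: $X\perp^\sigma_GY\mid Z\Rightarrow X\perp_{\mathbb{P}_V}Y\mid Z$ for all $X,Y,Z$. *)

From HB Require Import structures.
From mathcomp Require Import all_boot all_order all_algebra.
From mathcomp Require Import all_classical all_reals all_analysis.
Set Implicit Arguments. Unset Strict Implicit. Unset Printing Implicit Defensive.
Import Order.TTheory GRing.Theory Num.Theory.
Local Open Scope ring_scope.

Definition simplicial_complex (V : finType) (H : {set {set V}}) : Prop :=
  (forall v : V, [set v] \in H) /\
  (forall A B : {set V}, A \in H -> B \subset A -> B \in H).

(* Kinds of edges along a path step from a to b: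
   Fwd : a -> b,  Bwd : a <- b,  Bi : a <-> b. *)
Inductive ekind := Fwd | Bwd | Bi.
Definition is_fwd (k : ekind) : bool := if k is Fwd then true else false.
Definition is_bwd (k : ekind) : bool := if k is Bwd then true else false.

Definition valid_step (V : finType) (E : rel V) (H : {set {set V}})
  (a : V) (k : ekind) (b : V) : bool :=
  match k with
  | Fwd => E a b
  | Bwd => E b a
  | Bi => (a != b) && ([set a; b] \in H)
  end.

Fixpoint is_path (V : finType) (E : rel V) (H : {set {set V}})
  (x : V) (p : seq (ekind * V)) : bool :=
  match p with
  | [::] => true
  | (k, y) :: q => valid_step E H x k y && is_path E H y q
  end.

(* i-th node of the path (nodes numbered 0 .. size p) *)
Definition pnode (V : finType) (x0 : V) (p : seq (ekind * V)) (i : nat) : V :=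
  nth x0 (x0 :: map snd p) i.
(* kind of the edge between node i-1 and node i (for 1 <= i <= size p) *)
Definition pkind (V : finType) (p : seq (ekind * V)) (i : nat) : ekind :=
  nth Fwd (map fst p) i.-1.
Definition pend (V : finType) (x0 : V) (p : seq (ekind * V)) : V :=
  last x0 (map snd p).

(* node i is a collider: arrowheads at node i on both adjacent edges *)
Definition collider (V : finType) (p : seq (ekind * V)) (i : nat) : bool :=
  ~~ is_bwd (pkind p i) && ~~ is_fwd (pkind p i.+1).

Definition anc (V : finType) (E : rel V) (v : V) : {set V} :=
  [set u | connect E u v].
Definition desc (V : finType) (E : rel V) (v : V) : {set V} :=
  [set w | connect E v w].
Definition sc (V : finType) (E : rel V) (v : V) : {set V} :=
  anc E v :&: desc E v.
Definition ancS (V : finType) (E : rel V) (Z : {set V}) : {set V} :=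
  [set u | [exists z in Z, connect E u z]].

Definition d_blocked (V : finType) (E : rel V) (Z : {set V})
  (x0 : V) (p : seq (ekind * V)) : bool :=
  [|| x0 \in Z, pend x0 p \in Z |
   [exists i : 'I_(size p), (0 < i)%N &&
      (if collider p i then pnode x0 p i \notin ancS E Z
       else pnode x0 p i \in Z)]].

Definition sigma_blocked (V : finType) (E : rel V) (Z : {set V})
  (x0 : V) (p : seq (ekind * V)) : bool :=
  [|| x0 \in Z, pend x0 p \in Z |
   [exists i : 'I_(size p), (0 < i)%N &&
      (if collider p i then pnode x0 p i \notin ancS E Z
       else (pnode x0 p i \in Z) &&
            ((is_fwd (pkind p i.+1) &&
                (pnode x0 p i.+1 \notin sc E (pnode x0 p i))) ||
             (is_bwd (pkind p i) &&
                (pnode x0 p i.-1 \notin sc E (pnode x0 p i)))))]].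

Definition dsep (V : finType) (E : rel V) (H : {set {set V}})
  (X Y Z : {set V}) : Prop :=
  forall (x0 : V) (p : seq (ekind * V)), is_path E H x0 p ->
    x0 \in X -> pend x0 p \in Y -> d_blocked E Z x0 p.

Definition sigmasep (V : finType) (E : rel V) (H : {set {set V}})
  (X Y Z : {set V}) : Prop :=
  forall (x0 : V) (p : seq (ekind * V)), is_path E H x0 p ->
    x0 \in X -> pend x0 p \in Y -> sigma_blocked E Z x0 p.

Local Open Scope classical_set_scope.

(* Standard Borel space (Kuratowski): Borel-isomorphic to a Borel subset of R. *)
Definition standard_borel (R : realType) (dT : measure_display)
  (T : measurableType dT) : Prop :=
  exists f : T -> R, [/\ measurable_fun setT f, injective f &
    forall B : set T, measurable B -> measurable (f @` B)].

Definition gen_sigma (V : finType) (dT : V -> measure_display)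
  (T : forall v, measurableType (dT v)) (Omega : Type)
  (X : forall v, Omega -> T v) (A : {set V}) : set (set Omega) :=
  <<s [set S | exists v, exists B : set (T v),
          [/\ v \in A, measurable B & S = X v @^-1` B]] >>.

(* Conditional independence X_A _||_ X_B | X_C:
   for every event S in sigma(X_A), P(S | X_B, X_C) = P(S | X_C) a.s., i.e.
   there is a sigma(X_C)-measurable integrable phi with
   P(S /\ C) = int_C phi dP for every C in sigma(X_B, X_C). *)
Definition cond_indep (R : realType) (V : finType) (dT : V -> measure_display)
  (T : forall v, measurableType (dT v)) (d : measure_display)
  (Omega : measurableType d) (P : probability Omega R)
  (X : forall v, Omega -> T v) (A B C : {set V}) : Prop :=
  forall S, gen_sigma X A S ->
    exists phi : Omega -> R,
      [/\ forall D : set R, measurable D -> gen_sigma X C (phi @^-1` D),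
          P.-integrable setT (EFin \o phi) &
          forall U, gen_sigma X (B :|: C) U ->
            P (S `&` U) = (\int[P]_(x in U) (phi x)%:E)%E].

Definition directed_global_Markov (R : realType) (V : finType) (E : rel V)
  (H : {set {set V}}) (dT : V -> measure_display)
  (T : forall v, measurableType (dT v)) (d : measure_display)
  (Omega : measurableType d) (P : probability Omega R)
  (X : forall v, Omega -> T v) : Prop :=
  forall A B C : {set V}, dsep E H A B C -> cond_indep P X A B C.

Definition general_directed_global_Markov (R : realType) (V : finType)
  (E : rel V) (H : {set {set V}}) (dT : V -> measure_display)
  (T : forall v, measurableType (dT v)) (d : measure_display)
  (Omega : measurableType d) (P : probability Omega R)
  (X : forall v, Omega -> T v) : Prop :=
  forall A B C : {set V}, sigmasep E H A B C -> cond_indep P X A B C.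

From HB Require Import structures.
From mathcomp Require Import all_boot all_order all_algebra.
From mathcomp Require Import all_classical all_reals all_analysis.

(* Blocking a node in the sigma sense implies blocking it in the d sense, so
   sigma-separation implies d-separation.  Conversely, on a sigma-open walk
   every non-collider v in Z has its tails pointing into Sc(v); if H contains
   all pairs {v, w} with w in Sc(v), each such edge can be replaced by v <-> w.
   This only turns tails at nodes of Z into arrowheads, so every node of Z
   becomes a collider (open, as Z is contained in Anc(Z)) while all other
   nodes keep their status: the new walk is d-open.  Self-loops cannot be
   bidirected; they are removed first, which keeps the walk sigma-open.
   Both Markov properties then range over comparable separation relations. *)

Set Implicit Arguments.
Unset Strict Implicit.
Unset Printing Implicit Defensive.

Section Walks.
Variables (V : finType) (E : rel V) (H : {set {set V}}).
Implicit Types (x y u w : V) (k kl kr : ekind) (p q : seq (ekind * V)).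

Lemma pend_cons x k y q : pend x ((k, y) :: q) = pend y q.
Proof. by []. Qed.

Fixpoint arcs x p : seq (V * ekind * V) :=
  if p is (k, y) :: q then (x, k, y) :: arcs y q else [::].

Lemma size_arcs x p : size (arcs x p) = size p.
Proof. by elim: p x => [|[k y] q IH] x //=; rewrite IH. Qed.

Lemma nth_arcs a x p i : (i < size p)%N ->
  nth a (arcs x p) i = (pnode x p i, pkind p i.+1, pnode x p i.+1).
Proof.
elim: p x i => [|[k y] q IH] x [|i] //= lt_iq.
by rewrite IH // /pnode /=; congr (_, _, _); apply: set_nth_default;
  rewrite /= size_map // ltnW.
Qed.

Section Unblocked.
Variable blocks : V -> ekind -> V -> ekind -> V -> bool.

(* [c] is the node and edge kind preceding [x] on the walk; it is [None] at the
   start node, where there is no triple to check. *)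
Definition fits (c : option (V * ekind)) x k y :=
  if c is Some (u, kl) then ~~ blocks u kl x k y else true.

Fixpoint unblocked c x p :=
  if p is (k, y) :: q then fits c x k y && unblocked (Some (x, k)) y q
  else true.

Definition passes (a b : V * ekind * V) := ~~ blocks a.1.1 a.1.2 a.2 b.1.2 b.2.

Lemma unblocked_path u kl x p :
  unblocked (Some (u, kl)) x p = path passes (u, kl, x) (arcs x p).
Proof. by elim: p u kl x => [|[k y] q IH] u kl x //=; rewrite IH. Qed.

Lemma unblockedP x p : unblocked None x p =
  ~~ [exists i : 'I_(size p), (0 < i)%N &&
        blocks (pnode x p i.-1) (pkind p i) (pnode x p i) (pkind p i.+1)
               (pnode x p i.+1)].
Proof.
have -> : unblocked None x p = sorted passes (arcs x p).
  by case: p => [|[k y] q] //=; rewrite unblocked_path.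
rewrite negb_exists.
apply/(sortedP (x, Fwd, x))/forallP => [ok [[|i] lt_ip] | ok i] //=.
  by have := ok i; rewrite size_arcs !nth_arcs ?(ltnW lt_ip) // => /(_ lt_ip).
rewrite size_arcs => lt_ip; rewrite !nth_arcs //; last exact: ltnW.
exact: (ok (Ordinal lt_ip)).
Qed.

End Unblocked.

Lemma sub_unblocked (blocks blocks' : V -> ekind -> V -> ekind -> V -> bool)
    c x p :
  (forall u kl v kr w, blocks u kl v kr w -> blocks' u kl v kr w) ->
  unblocked blocks' c x p -> unblocked blocks c x p.
Proof.
move=> sub; elim: p c x => [|[k y] q IH] c x //= /andP [fit /IH ->].
by case: c fit => [[u kl]|] //=; rewrite andbT; apply: contra; apply: sub.
Qed.

Fixpoint drop_loops x p :=
  if p is (k, y) :: q then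
    if y == x then drop_loops x q else (k, y) :: drop_loops y q
  else [::].

Definition loopless x p := all (fun a => a.1.1 != a.2) (arcs x p).

Lemma is_path_drop_loops x p :
  is_path E H x p -> is_path E H x (drop_loops x p).
Proof.
elim: p x => [|[k y] q IH] x //= /andP [step /IH path_q].
by case: eqVneq => [yx | _] /=; [rewrite -yx | rewrite step].
Qed.

Lemma pend_drop_loops x p : pend x (drop_loops x p) = pend x p.
Proof.
elim: p x => [|[k y] q IH] x //=.
by case: eqVneq => [-> | _]; rewrite !pend_cons IH.
Qed.

Lemma loopless_drop_loops x p : loopless x (drop_loops x p).
Proof.
elim: p x => [|[k y] q IH] x //=.
case: eqVneq => [_ | neq_yx] //; rewrite /loopless /= eq_sym neq_yx.
exact: IH.
Qed.

Lemma unblocked_drop_loops blocks c c' x p :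
  (forall u kl v k kr w, ~~ blocks u kl v k v -> ~~ blocks v k v kr w ->
     ~~ blocks u kl v kr w) ->
  (forall k y, fits blocks c x k y -> fits blocks c' x k y) ->
  unblocked blocks c x p -> unblocked blocks c' x (drop_loops x p).
Proof.
move=> skip; elim: p c c' x => [|[k y] q IH] c c' x //= cc' /andP [fit ub].
case: eqVneq => [yx | _] /=; last by rewrite cc' //; apply: IH ub.
rewrite yx in fit ub; apply: IH ub => kr w /= fit_w; apply: cc'.
by case: c fit => [[u kl]|] //= fit; apply: skip fit fit_w.
Qed.

Lemma sc_refl v : v \in sc E v.
Proof. by rewrite !inE connect0. Qed.

Section Blocking.
Variable Z : {set V}.

Definition d_blocks u kl v kr w :=
  if ~~ is_bwd kl && ~~ is_fwd kr then v \notin ancS E Z else v \in Z.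

Definition sigma_blocks u kl v kr w :=
  if ~~ is_bwd kl && ~~ is_fwd kr then v \notin ancS E Z
  else (v \in Z) && ((is_fwd kr && (w \notin sc E v)) ||
                     (is_bwd kl && (u \notin sc E v))).

Lemma d_blockedE x p :
  d_blocked E Z x p =
  [|| x \in Z, pend x p \in Z | ~~ unblocked d_blocks None x p].
Proof. by rewrite unblockedP negbK. Qed.

Lemma sigma_blockedE x p : sigma_blocked E Z x p =
  [|| x \in Z, pend x p \in Z | ~~ unblocked sigma_blocks None x p].
Proof. by rewrite unblockedP negbK. Qed.

Lemma sigma_blocks_d_blocks u kl v kr w :
  sigma_blocks u kl v kr w -> d_blocks u kl v kr w.
Proof. by rewrite /sigma_blocks /d_blocks; case: ifP => // _ /andP []. Qed.

Lemma mem_ancS v : v \in Z -> v \in ancS E Z.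
Proof.
by move=> vZ; rewrite inE; apply/existsP; exists v; rewrite vZ connect0.
Qed.

Lemma sigma_blocks_skip_loop u kl x k kr w :
  ~~ sigma_blocks u kl x k x -> ~~ sigma_blocks x k x kr w ->
  ~~ sigma_blocks u kl x kr w.
Proof.
rewrite /sigma_blocks sc_refl.
case: (boolP (x \in Z)) => [/mem_ancS -> | _]; case: kl k kr => [] [] [] //=.
all: by rewrite !negb_or => -> /andP [->].
Qed.

Lemma sigma_unblocked_fwd_sc u kl v w :
  v \in Z -> ~~ sigma_blocks u kl v Fwd w -> w \in sc E v.
Proof. by rewrite /sigma_blocks andbF => -> /norP [/negPn]. Qed.

Lemma sigma_unblocked_bwd_sc u v kr w :
  v \in Z -> ~~ sigma_blocks u Bwd v kr w -> u \in sc E v.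
Proof. by rewrite /sigma_blocks /= => -> /norP [_ /negPn]. Qed.

Definition bidir_kind x k y :=
  match k with
  | Fwd => if x \in Z then Bi else Fwd
  | Bwd => if y \in Z then Bi else Bwd
  | Bi => Bi
  end.

Lemma d_unblocked_bidir u kl v kr w :
  ~~ sigma_blocks u kl v kr w ->
  ~~ d_blocks u (bidir_kind u kl v) v (bidir_kind v kr w) w.
Proof.
rewrite /sigma_blocks /d_blocks /bidir_kind.
case: (boolP (v \in Z)) => [/mem_ancS -> | /negPf vZ];
  by case: kl kr (u \in Z) (w \in Z) => [] [] [] [] //=; rewrite vZ.
Qed.

Fixpoint bidirect x p :=
  if p is (k, y) :: q then (bidir_kind x k y, y) :: bidirect y q else [::].

Lemma pend_bidirect x p : pend x (bidirect x p) = pend x p.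
Proof. by elim: p x => [|[k y] q IH] x //=; rewrite !pend_cons IH. Qed.

Lemma unblocked_bidirect c x p :
  unblocked sigma_blocks c x p ->
  unblocked d_blocks (omap (fun '(u, kl) => (u, bidir_kind u kl x)) c) x
    (bidirect x p).
Proof.
elim: p c x => [|[k y] q IH] c x //= /andP [fit /IH ->].
by case: c fit => [[u kl]|] //= /d_unblocked_bidir ->.
Qed.

Lemma is_path_bidirect (Hsc : forall v w, w \in sc E v -> [set v; w] \in H)
  c x p :
  is_path E H x p -> loopless x p -> unblocked sigma_blocks c x p ->
  (c = None -> x \notin Z) -> pend x p \notin Z ->
  is_path E H x (bidirect x p).
Proof.
elim: p c x => [|[k y] q IH] c x //=.
rewrite /loopless /= => /andP [step path_q] /andP [neq_xy ll_q].
case/andP=> fit ub_q.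
rewrite pend_cons => start end_q; rewrite (IH (Some (x, k))) // andbT.
case: k step fit ub_q => //= step fit ub_q.
- case: ifP => // xZ; rewrite /valid_step neq_xy /=; apply: Hsc.
  case: c fit start => [[u kl]|] fit start.
    exact: sigma_unblocked_fwd_sc xZ fit.
  by move: (start erefl); rewrite xZ.
- case: ifP => // yZ; rewrite /valid_step neq_xy finset.setUC; apply: Hsc.
  case: q ub_q end_q {path_q ll_q IH} => [|[k2 w] r] /=.
    by rewrite yZ.
  by case/andP=> fit_y _ _; apply: sigma_unblocked_bwd_sc yZ fit_y.
Qed.

End Blocking.

Lemma sigmasep_dsep X Y Z : sigmasep E H X Y Z -> dsep E H X Y Z.
Proof.
move=> sep x p path_p Xx Yend; move: (sep x p path_p Xx Yend).
rewrite sigma_blockedE d_blockedE; case/or3P=> [->|->|ub]; rewrite ?orbT //.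
apply/or3P/Or33; apply: contra ub; apply: sub_unblocked.
exact: sigma_blocks_d_blocks.
Qed.

Lemma dsep_sigmasep (Hsc : forall v w, w \in sc E v -> [set v; w] \in H)
  X Y Z : dsep E H X Y Z -> sigmasep E H X Y Z.
Proof.
move=> sep x p path_p Xx Yend; rewrite sigma_blockedE.
apply/idPn; rewrite !negb_or negbK => /and3P [xZ endZ ub].
have ub' : unblocked (sigma_blocks Z) None x (drop_loops x p).
  exact: unblocked_drop_loops (@sigma_blocks_skip_loop Z) _ ub.
set p' := bidirect Z x (drop_loops x p).
have end_p' : pend x p' = pend x p by rewrite pend_bidirect pend_drop_loops.
have path_p' : is_path E H x p'.
  apply: (is_path_bidirect Hsc (is_path_drop_loops path_p)
                            (loopless_drop_loops x p) ub') => //.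
  by rewrite pend_drop_loops.
have := sep x p' path_p' Xx; rewrite end_p' d_blockedE end_p' => /(_ Yend).
by rewrite (negbTE xZ) (negbTE endZ) (unblocked_bidirect ub').
Qed.

End Walks.

Theorem mainTheorem8 (R : realType) (V : finType) (E : rel V)
  (H : {set {set V}}) (HH : simplicial_complex H)
  (dT : V -> measure_display) (T : forall v, measurableType (dT v))
  (HT : forall v, standard_borel R (T v))
  (d : measure_display) (Omega : measurableType d) (P : probability Omega R)
  (X : forall v, Omega -> T v) (mX : forall v, measurable_fun setT (X v)) :
  (directed_global_Markov E H P X -> general_directed_global_Markov E H P X) /\
  ((forall v w : V, w \in sc E v -> [set v; w] \in H) ->
   general_directed_global_Markov E H P X -> directed_global_Markov E H P X).
Proof.
split=> [markov A B C /sigmasep_dsep | Hsc markov A B C /(dsep_sigmasep Hsc)];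
  exact: markov.
Qed.
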